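(* Let $k\geq 3$, $t,q\geq k-1$, $\chi>\binom{q}{k-1}$ and $n\geq 3(k-1)$ be integers with $n\equiv 0\pmod{k-1}$. Let $H$ be the $k$-graph on vertex set $A_1\sqcup\dots\sqcup A_\chi$, where $|A_i|>(\chi-1)(k-2)+\max\{\tau(k-1,t),q\}$ for all $i\in[\chi-1]$ and $|A_\chi|=t$, whose edges are all $k$-subsets $e$ of the vertex set such that $|e\cap A_i|=k-1$ for some $i\in[\chi]$. Then $R(C^{(k)}_{n,1},H)>(\chi-1)(n-1)+\max\{\tau(k-1,t),q\}$.
   Context: A $k$-graph is a $k$-uniform hypergraph. $R(G,H)$ is the least $N$ such that every red/blue colouring of the edges of $K^{(k)}_N$ contains a red copy of $G$ or a blue copy of $H$. For $n=q'(k-1)$, the loose cycle $C^{(k)}_{n,1}$ has vertices $v_1,\dots,v_n$ and edges $\{v_{(i-1)(k-1)+1},\dots,v_{i(k-1)+1}\}$ for $i\in[q']$, with $v_{n+1}=v_1$. For integers $j,\alpha\ge1$, $\tau(j,\alpha)$ is the largest $N$ such that some $j$-uniform hypergraph on $N$ vertices has independence number less than $\alpha$ and no two edges meeting in exactly one vertex. *)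

From mathcomp Require Import all_boot.
Set Implicit Arguments. Unset Strict Implicit. Unset Printing Implicit Defensive.

Definition uniform (V : finType) (k : nat) (E : {set {set V}}) : Prop :=
  forall e, e \in E -> #|e| = k.

Definition has_copy (N : nat) (c : {set 'I_N} -> bool) (b : bool)
  (V : finType) (E : {set {set V}}) : Prop :=
  exists f : V -> 'I_N, injective f /\ forall e, e \in E -> c (f @: e) = b.

(* N -> (G,H): every red(true)/blue(false) colouring of the edges of K_N
   contains a red copy of G or a blue copy of H. *)
Definition ramsey_arrow (N : nat) (V1 : finType) (E1 : {set {set V1}})
  (V2 : finType) (E2 : {set {set V2}}) : Prop :=
  forall c : {set 'I_N} -> bool, has_copy c true E1 \/ has_copy c false E2.

Definition loose_cycle (k n : nat) : {set {set 'I_n}} :=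
  [set [set v : 'I_n | [exists j : 'I_k, val v == (i * (k - 1) + j) %% n]]
     | i : 'I_(n %/ (k - 1))].

Definition independent (V : finType) (E : {set {set V}}) (S : {set V}) : bool :=
  [forall e in E, ~~ (e \subset S)].

Definition tau_witness (j alpha N : nat) : Prop :=
  exists E : {set {set 'I_N}},
    uniform j E /\
    (forall S : {set 'I_N}, independent E S -> #|S| < alpha) /\
    (forall e1 e2, e1 \in E -> e2 \in E -> e1 != e2 -> #|e1 :&: e2| != 1).

Definition is_tau (j alpha T : nat) : Prop :=
  tau_witness j alpha T /\ forall N, tau_witness j alpha N -> N <= T.

(* The k-graph H on A_1 ⊔ ... ⊔ A_chi, with |A_i| = a i: all k-subsets e with
   |e ∩ A_i| = k-1 for some i. *)
Definition Hvert (chi : nat) (a : 'I_chi -> nat) : finType :=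
  {i : 'I_chi & 'I_(a i)}.

Definition part (chi : nat) (a : 'I_chi -> nat) (i : 'I_chi) : {set Hvert a} :=
  [set x : Hvert a | tag x == i].

Definition Hgraph (k chi : nat) (a : 'I_chi -> nat) : {set {set Hvert a}} :=
  [set e : {set Hvert a} | (#|e| == k) && [exists i, #|e :&: part a i| == k - 1]].

From mathcomp Require Import all_boot zify.
Set Implicit Arguments. Unset Strict Implicit. Unset Printing Implicit Defensive.

(* Colour the complete k-graph on a core of max(tau(k-1,t), q) vertices and chi-1 blocks
   of n-1 vertices: an edge is red if it lies inside a block, or if it is a vertex of block j
   together with a (k-1)-subset of the core assigned to colour j.  Every colour gets the edges
   of a tau(k-1,t)-witness when tau(k-1,t) >= q; otherwise each (k-1)-subset of the q-vertex
   core gets its own colour, as 'C(q, k-1) < chi.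

   There is no blue H: each large part A_i has k-1 vertices in one block, distinct parts use
   distinct blocks (or an edge of H would lie in a block), so every block is used and A_chi
   lands in the core.  Its image contains a set of some colour j, which with a vertex of the
   part using block j spans a red edge of H.

   There is no red loose cycle: consecutive edges share exactly one vertex.  With the
   tau-witness no two assigned sets meet in exactly one vertex, so the shared vertices avoid
   the core, every edge has two vertices outside the core, hence lies in a block, and all n
   vertices would fit into one block.  With one set per colour, an edge through the core
   followed by one inside a block forces the rest of the cycle into that block and back
   through a second non-core vertex of the first edge; so all edges lie in blocks (impossible
   as before) or none does, and then the cycle needs more than q core vertices.  That is
   excluded unless H has more than N vertices, in which case the all-blue colouring works. *)

Definition mono_copy (W : finType) (col : {set W} -> bool) (b : bool)
  (V : finType) (E : {set {set V}}) : Prop :=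
  exists f : V -> W, injective f /\ forall e, e \in E -> col (f @: e) = b.

Lemma not_arrow_of_colouring (N : nat) (W : finType) (col : {set W} -> bool)
    (V1 : finType) (E1 : {set {set V1}}) (V2 : finType) (E2 : {set {set V2}}) :
  N <= #|W| -> ~ mono_copy col true E1 -> ~ mono_copy col false E2 ->
  ~ ramsey_arrow N E1 E2.
Proof.
move=> leNW noE1 noE2 arrow.
pose h (i : 'I_N) : W := enum_val (widen_ord leNW i).
have h_inj : injective h.
  by move=> i j /enum_val_inj /(congr1 val) /= /val_inj.
have copy_h (V : finType) (f : V -> 'I_N) b (E : {set {set V}}) : injective f ->
    (forall e, e \in E -> col (h @: (f @: e)) = b) -> mono_copy col b E.
  move=> f_inj f_col; exists (h \o f); split; first exact: inj_comp.
  by move=> e eE; rewrite imset_comp f_col.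
by case: (arrow (fun S => col (h @: S))) => -[f [f_inj f_col]];
  [apply: noE1 | apply: noE2]; exact: copy_h f_inj f_col.
Qed.

Lemma not_arrow_of_card_lt (N : nat)
    (V1 : finType) (E1 : {set {set V1}}) (V2 : finType) (E2 : {set {set V2}}) :
  E1 != set0 -> N < #|V2| -> ~ ramsey_arrow N E1 E2.
Proof.
case/set0Pn=> e eE1 ltNV2 /(_ (fun _ => false)) [[f [_ /(_ e eE1)]] // | [f [f_inj _]]].
by move: (leq_card f f_inj); rewrite card_ord leqNgt ltNV2.
Qed.

Lemma card_bigcup_le (T I : finType) (F : I -> {set T}) :
  #|\bigcup_i F i| <= \sum_i #|F i|.
Proof.
elim/big_rec2: _ => [|i n A _ leAn]; first by rewrite cards0.
by rewrite cardsU; lia.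
Qed.

Lemma exists_card_subset (T : finType) (A : {set T}) (r : nat) :
  r <= #|A| -> exists2 S : {set T}, S \subset A & #|S| = r.
Proof.
move=> le_rA; exists [set x in take r (enum A)].
  by apply/subsetP => x; rewrite inE => /mem_take; rewrite mem_enum.
rewrite cardsE (card_uniqP _) ?take_uniq ?enum_uniq // size_take -cardE.
by case: ltngtP le_rA.
Qed.

Lemma imset_preim_subset (aT rT : finType) (f : aT -> rT) (P : {set aT}) (s : {set rT}) :
  s \subset f @: P -> f @: (P :&: f @^-1: s) = s.
Proof.
move=> sP; apply/setP => z; apply/imsetP/idP => [[y] | zs].
  by rewrite !inE => /andP [_ ys] ->.
have /imsetP [y yP zE] := subsetP sP z zs.
by exists y; rewrite // !inE yP -zE.
Qed.

Lemma modn_addr_neq L i d : 0 < d < L -> i %% L != (i + d) %% L.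
Proof.
move=> /andP [d_gt0 ltdL]; rewrite -[X in X %% L]addn0 eqn_modDl mod0n modn_small //.
by rewrite eq_sym -lt0n.
Qed.

Lemma modnS_small L i : i < L -> i.+1 %% L = if i.+1 == L then 0 else i.+1.
Proof. by move=> ltiL; case: eqP => [-> | ne]; rewrite ?modnn // modn_small //; lia. Qed.

Lemma exists_rising_edge (P : pred nat) i0 i1 :
  ~~ P i0 -> P i1 -> i0 <= i1 -> exists i, ~~ P i && P i.+1.
Proof.
move=> Pi0 Pi1 /subnK eq_i1; rewrite -eq_i1 in Pi1.
elim: (i1 - i0) Pi1 => [|d IH]; first by rewrite add0n (negbTE Pi0).
rewrite addSn => Pd; case: (boolP (P (d + i0))) => [/IH // | notP].
by exists (d + i0); rewrite notP Pd.
Qed.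

Lemma n_leq_bin n m : 0 < m < n -> n <= 'C(n, m).
Proof.
elim: n m => [|n IH] [|[|m]] //; first by rewrite bin1.
rewrite ltnS /= => ltmn; rewrite binS.
have le_n : n <= 'C(n, m.+1) by apply: IH.
have : 0 < 'C(n, m.+2) by rewrite bin_gt0.
by lia.
Qed.

Definition no_single_meet (I : Type) (T : finType) (F : I -> {set {set T}}) : Prop :=
  forall j j' s s', s \in F j -> s' \in F j' -> #|s :&: s'| = 1 -> s = s'.

Definition one_per_colour (I : Type) (T : finType) (F : I -> {set {set T}}) : Prop :=
  forall j s s', s \in F j -> s' \in F j -> s = s'.

(** * Red edges of the host colouring *)

Section Host.

Variables (W : finType) (c : nat) (blk : W -> option 'I_c).
Variable Fam : 'I_c -> {set {set W}}.

Definition core : {set W} := [set x | blk x == None].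
Definition block (j : 'I_c) : {set W} := [set x | blk x == Some j].

Definition internal (E : {set W}) : bool := [exists j, E \subset block j].

Definition red (E : {set W}) : bool :=
  internal E ||
  [exists j, [exists s in Fam j, [exists v in block j, E == v |: s]]].

Hypothesis Fam_core : forall j s, s \in Fam j -> s \subset core.

Lemma block_core j x : x \in block j -> x \in core -> False.
Proof. by rewrite !inE => /eqP ->. Qed.

Lemma block_inj j j' x : x \in block j -> x \in block j' -> j = j'.
Proof. by rewrite !inE => /eqP -> /eqP []. Qed.

Lemma notin_core x : x \notin core -> exists j, x \in block j.
Proof. by rewrite inE; case E: (blk x) => [j|] // _; exists j; rewrite inE E. Qed.

Variant red_spec (E : {set W}) : Prop :=
  | RedInternal j of E \subset block j
  | RedCrossing j s v of s \in Fam j & v \in block j & E = v |: s.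

Lemma redP E : red E -> red_spec E.
Proof.
case/orP => [/existsP [j] | /existsP [j /existsP [s /andP [sF]]]].
  exact: RedInternal.
by case/existsP => v /andP [vj /eqP ->]; exact: RedCrossing sF vj _.
Qed.

Lemma red_internal j (E : {set W}) : E \subset block j -> red E.
Proof. by move=> Ej; apply/orP; left; apply/existsP; exists j. Qed.

Lemma red_crossing j s v : s \in Fam j -> v \in block j -> red (v |: s).
Proof.
move=> sF vj; apply/orP; right; apply/existsP; exists j.
by apply/existsP; exists s; rewrite sF; apply/existsP; exists v; rewrite vj eqxx.
Qed.

Lemma crossing_noncore j s v y :
  s \in Fam j -> y \in v |: s -> y \notin core -> y = v.
Proof.
move=> sF; rewrite in_setU1 => /orP [/eqP // | ys].
by rewrite (subsetP (Fam_core sF) y ys).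
Qed.

Lemma red_noncore_eq E y y' : red E -> ~~ internal E ->
  y \in E -> y' \in E -> y \notin core -> y' \notin core -> y = y'.
Proof.
case/redP => [j Ej /existsP [] | j s v sF vj ->]; first by exists j.
by move=> _ yE y'E y0 y'0; rewrite (crossing_noncore sF yE y0) (crossing_noncore sF y'E y'0).
Qed.

Lemma red_core E y : red E -> y \in E -> y \in core ->
  exists j s, [/\ s \in Fam j, y \in s & s \subset E].
Proof.
case/redP => [j Ej yE | j s v sF vj -> ]; first by move/block_core: (subsetP Ej y yE).
rewrite in_setU1 => /orP [/eqP -> /(block_core vj) // | ys _].
by exists j, s; split; rewrite ?subsetU1.
Qed.

Lemma block_pigeonhole (A : {set W}) r :
  #|core| + c * r < #|A| -> exists j, r < #|A :&: block j|.
Proof.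
move=> ltA; apply/existsP; apply: contraLR ltA; rewrite negb_exists -leqNgt.
move=> /forallP small.
have cover_A : A \subset (A :&: core) :|: \bigcup_j (A :&: block j).
  apply/subsetP => x xA; rewrite !inE xA /=.
  case: (boolP (x \in core)) => [/[!inE] -> // | /notin_core [j xj]].
  by apply/orP; right; apply/bigcupP; exists j; rewrite // inE xA.
apply: leq_trans (subset_leq_card cover_A) _.
apply: leq_trans (leq_card_setU _ _).1 _; apply: leq_add.
  exact/subset_leq_card/subsetIr.
apply: leq_trans (card_bigcup_le _) _.
apply: leq_trans (_ : \sum_(j < c) r <= _); last by rewrite sum_nat_const card_ord.
by apply: leq_sum => j _; rewrite leqNgt small.
Qed.

Section RedWalk.

(* A closed walk of [L] red edges, indices taken mod [L]: [x i] is the vertex that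
   [Ed i] shares with the previous edge. *)
Variables (L : nat) (Ed : nat -> {set W}) (x : nat -> W).
Hypotheses (L_gt1 : 1 < L) (Ed_mod : forall i, Ed (i %% L) = Ed i)
  (x_mod : forall i, x (i %% L) = x i).
Hypotheses (x_in : forall i, x i \in Ed i) (x_in_pred : forall i, x i.+1 \in Ed i)
  (x_neq : forall i, x i != x i.+1).
Hypothesis Ed_meet : forall i i', i %% L != i' %% L -> #|Ed i :&: Ed i'| <= 1.
Hypothesis Ed_red : forall i, red (Ed i).
Hypothesis Fam_card : forall j s, s \in Fam j -> 1 < #|s|.

Let U := \bigcup_(i < L) Ed i.

Lemma Ed_addn i : Ed (i + L) = Ed i.
Proof. by rewrite -Ed_mod modnDr Ed_mod. Qed.

Lemma internal_walk_block :
  (forall i, internal (Ed i)) -> exists j, U \subset block j.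
Proof.
move=> int; have /existsP [j0 E0] := int 0.
have Ed_j0 i : Ed i \subset block j0.
  elim: i => // i IH; have /existsP [j Ej] := int i.+1.
  by rewrite -(block_inj (subsetP Ej _ (x_in i.+1)) (subsetP IH _ (x_in_pred i))).
by exists j0; apply/bigcupsP => i _; exact: Ed_j0.
Qed.

Lemma crossing_walk_card :
  (forall i, ~~ internal (Ed i)) -> #|U| <= #|core| + L.
Proof.
move=> cross.
have noncore_le1 i : #|Ed i :\: core| <= 1.
  apply/card_le1_eqP => y y'; rewrite !in_setD => /andP [y0 yE] /andP [y'0 y'E].
  exact: red_noncore_eq (Ed_red i) (cross i) y'E yE y'0 y0.
rewrite -(cardsID core U); apply: leq_add; first exact/subset_leq_card/subsetIr.
have cover : U :\: core \subset \bigcup_(i < L) (Ed i :\: core).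
  apply/subsetP => y; rewrite in_setD => /andP [y0 /bigcupP [i _ yE]].
  by apply/bigcupP; exists i; rewrite // in_setD y0.
apply: leq_trans (subset_leq_card cover) _; apply: leq_trans (card_bigcup_le _) _.
apply: leq_trans (_ : \sum_(i < L) 1 <= _); last by rewrite sum_nat_const card_ord muln1.
exact: leq_sum.
Qed.

Lemma joint_noncore : no_single_meet Fam -> forall i, x i.+1 \notin core.
Proof.
move=> Fam_meet i; apply/negP => x0.
have [j [s [sF xs sE]]] := red_core (Ed_red i) (x_in_pred i) x0.
have [j' [s' [s'F xs' s'E]]] := red_core (Ed_red i.+1) (x_in i.+1) x0.
have le1 : #|s :&: s'| <= 1.
  apply: leq_trans (subset_leq_card (setISS sE s'E)) (Ed_meet _).
  by rewrite -addn1 modn_addr_neq // L_gt1.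
have ge1 : 0 < #|s :&: s'| by apply/card_gt0P; exists (x i.+1); rewrite inE xs xs'.
have eq_ss' : s = s' by apply: Fam_meet sF s'F _; apply/eqP; rewrite eqn_leq le1 ge1.
by move: le1; rewrite eq_ss' setIid leqNgt (Fam_card s'F).
Qed.

Lemma no_single_meet_red_walk : no_single_meet Fam -> exists j, U \subset block j.
Proof.
move=> /joint_noncore x0; apply: internal_walk_block => i.
apply: contraT => cross; rewrite -(negbTE (x_neq (i + L.-1).+1)); apply/eqP.
have succ : (i + L.-1).+1 = i + L by rewrite -addnS prednK // ltnW.
rewrite -Ed_addn in cross; apply: red_noncore_eq (Ed_red (i + L)) cross _ _ (x0 _) (x0 _).
  by rewrite succ x_in.
by rewrite succ x_in_pred.
Qed.

Lemma x_addn i : x (i + L) = x i.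
Proof. by rewrite -x_mod modnDr x_mod. Qed.

(* A second crossing edge of colour [j] would carry the same set [sg] as [Ed s]. *)
Lemma crossing_run_step s j sg v d :
  one_per_colour Fam -> sg \in Fam j -> Ed s = v |: sg -> d.+2 < L ->
  Ed (s + d.+1) \subset block j -> Ed (s + d.+2) \subset block j.
Proof.
move=> Fam_one sgF Es ltdL prev_j.
have y_j : x (s + d.+2) \in block j.
  by apply: (subsetP prev_j); rewrite (addnS s d.+1) x_in_pred.
case/redP: (Ed_red (s + d.+2)) => [j'' Ej'' | j' sg' v' sg'F v'j' Es'].
  by rewrite -(block_inj (subsetP Ej'' _ (x_in _)) y_j).
have y_v' : x (s + d.+2) = v'.
  apply: crossing_noncore sg'F _ _; first by rewrite -Es' x_in.
  by apply/negP => /(block_core y_j).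
have eq_jj' : j' = j by apply: block_inj v'j' _; rewrite -y_v'.
rewrite eq_jj' in sg'F; have eq_sg := Fam_one _ _ _ sg'F sgF.
have : #|sg| <= 1.
  apply: leq_trans (Ed_meet (modn_addr_neq s (_ : 0 < d.+2 < L))); last by lia.
  by apply: subset_leq_card; rewrite subsetI Es Es' eq_sg !subsetU1.
by rewrite leqNgt (Fam_card sgF).
Qed.

Lemma crossing_then_internal s :
  one_per_colour Fam -> ~~ internal (Ed s) -> internal (Ed s.+1) -> False.
Proof.
move=> Fam_one cross_s int_s1.
case/redP: (Ed_red s) cross_s => [j Ej /existsP [] | j sg v sgF vj Es _]; first by exists j.
have noncore_v y j' : y \in Ed s -> y \in block j' -> y = v.
  move=> yE yj'; apply: crossing_noncore sgF _ _; first by rewrite -Es.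
  by apply/negP => /(block_core yj').
have in_j d : d < L.-1 -> Ed (s + d.+1) \subset block j.
  elim: d => [_ | d IH ltdL]; last first.
    by apply: (crossing_run_step Fam_one sgF Es); [lia | apply: IH; lia].
  case/existsP: int_s1 => j' Ej'; have y_j' := subsetP Ej' _ (x_in s.+1).
  rewrite addn1 (block_inj vj (_ : v \in block j')) //.
  by rewrite -(noncore_v _ _ (x_in_pred s) y_j').
have x_s : x s = v.
  apply: noncore_v (x_in s) _; rewrite -x_addn.
  have -> : s + L = (s + L.-2.+1).+1 by lia.
  by apply: (subsetP (in_j L.-2 _)); rewrite ?x_in_pred //; lia.
have x_s1 : x s.+1 = v.
  by apply: noncore_v (x_in_pred s) _; apply: (subsetP (in_j 0 _)); rewrite ?addn1 ?x_in //; lia.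
by move/eqP: (x_neq s); rewrite x_s x_s1.
Qed.

Lemma one_per_colour_red_walk :
  one_per_colour Fam ->
  (exists j, U \subset block j) \/ #|U| <= #|core| + L.
Proof.
move=> Fam_one; pose P i := internal (Ed i).
have P_mod i : P (i %% L) = P i by rewrite /P Ed_mod.
have L_gt0 : 0 < L by lia.
case: (boolP [forall i : 'I_L, P i]) => [/forallP allP | /forallPn [i0 notP0]].
  left; apply: internal_walk_block => i; rewrite -/(P i) -P_mod.
  exact: allP (Ordinal (ltn_pmod i L_gt0)).
case: (boolP [exists i : 'I_L, P i]) => [/existsP [i1 P1] | /existsPn noP].
  have P1' : P (i0 * L + i1) by rewrite -P_mod modnMDl P_mod.
  have le_i0 : i0 <= i0 * L + i1 by nia.
  have [s /andP [notPs Ps1]] := exists_rising_edge notP0 P1' le_i0.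
  by case: (crossing_then_internal Fam_one notPs Ps1).
right; apply: crossing_walk_card => i; rewrite -/(P i) -P_mod.
exact: noP (Ordinal (ltn_pmod i L_gt0)).
Qed.

End RedWalk.

End Host.

(** * Loose cycles *)

Section LooseCycle.

Variables (k n L : nat).
Hypotheses (k_gt1 : 1 < k) (n_eq : n = L * (k - 1)) (L_gt2 : 2 < L).

Definition cycle_edge (i : nat) : {set 'I_n} :=
  [set v : 'I_n | [exists j : 'I_k, val v == (i * (k - 1) + j) %% n]].

Lemma cycle_order_gt0 : 0 < n.
Proof. by rewrite n_eq muln_gt0; apply/andP; split; lia. Qed.

Definition joint (i : nat) : 'I_n := Ordinal (ltn_pmod (i * (k - 1)) cycle_order_gt0).

Lemma edge_count : n %/ (k - 1) = L.
Proof. by rewrite n_eq mulnK //; lia. Qed.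

Lemma modn_mulD i j : (i %% L * (k - 1) + j) %% n = (i * (k - 1) + j) %% n.
Proof.
by rewrite {2}(divn_eq i L) mulnDl -mulnA -n_eq -addnA modnMDl.
Qed.

Lemma cycle_edge_mod i : cycle_edge (i %% L) = cycle_edge i.
Proof. by apply/setP => v; rewrite !inE; apply: eq_existsb => j; rewrite modn_mulD. Qed.

Lemma joint_mod i : joint (i %% L) = joint i.
Proof. by apply: val_inj => /=; rewrite -[_ * _]addn0 modn_mulD addn0. Qed.

Lemma joint_in i : joint i \in cycle_edge i.
Proof. by rewrite inE; apply/existsP; exists (Ordinal (ltnW k_gt1)); rewrite addn0. Qed.

Lemma joint_in_pred i : joint i.+1 \in cycle_edge i.
Proof.
have ltk : k - 1 < k by lia.
by rewrite inE; apply/existsP; exists (Ordinal ltk); rewrite /= mulSn addnC.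
Qed.

Lemma joint_neq i : joint i != joint i.+1.
Proof.
rewrite -val_eqE /= mulSn addnC -[X in X %% n == _]addn0 eqn_modDl mod0n modn_small.
  by lia.
by rewrite n_eq; nia.
Qed.

Lemma mem_cycle_edge_div (v : 'I_n) : v \in cycle_edge (v %/ (k - 1)).
Proof.
have ltk : v %% (k - 1) < k by apply: leq_trans (ltn_pmod _ _) _; lia.
by rewrite inE; apply/existsP; exists (Ordinal ltk); rewrite /= -divn_eq modn_small.
Qed.

Lemma cycle_edge_cover : \bigcup_(i < L) cycle_edge i = [set: 'I_n].
Proof.
apply/eqP; rewrite eqEsubset subsetT /=; apply/subsetP => v _.
have ltvL : v %/ (k - 1) < L by rewrite ltn_divLR -?n_eq //; lia.
by apply/bigcupP; exists (Ordinal ltvL); rewrite ?mem_cycle_edge_div.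
Qed.

Lemma cycle_edge_loose i : cycle_edge i \in loose_cycle k n.
Proof.
have lt : i %% L < n %/ (k - 1) by rewrite edge_count ltn_pmod // ltnW // ltnW.
by rewrite -cycle_edge_mod; apply/imsetP; exists (Ordinal lt).
Qed.

Lemma joint_val i : val (joint i) = i %% L * (k - 1).
Proof.
rewrite /= -[_ * _]addn0 -modn_mulD addn0 modn_small // n_eq ltn_mul2r.
by rewrite ltn_pmod ?andbT; lia.
Qed.

Lemma joint_div i : joint i %/ (k - 1) = i %% L.
Proof. by rewrite joint_val mulnK //; lia. Qed.

Lemma mem_cycle_edge i (v : 'I_n) : i < L ->
  (v \in cycle_edge i) = (v %/ (k - 1) == i) || (v == joint i.+1).
Proof.
move=> ltiL; apply/idP/orP => [| [/eqP <- | /eqP ->]]; last first.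
- exact: joint_in_pred.
- exact: mem_cycle_edge_div.
rewrite inE => /existsP [j /eqP v_eq].
case: (ltnP j (k - 1)) => [ltj | gej].
  left; rewrite v_eq modn_small; last by rewrite n_eq; nia.
  by rewrite divnMDl ?divn_small ?addn0 //; lia.
have j_eq : nat_of_ord j = k - 1 by have := ltn_ord j; lia.
by right; apply/eqP/val_inj; rewrite v_eq /= j_eq mulSn addnC.
Qed.

Lemma succ_mod_inj a b : a < L -> b < L -> a.+1 %% L = b.+1 %% L -> a = b.
Proof. by move=> ltaL ltbL; rewrite !modnS_small //; do 2 case: eqP; lia. Qed.

Lemma succ_mod_asym a b : a < L -> b < L -> a = b.+1 %% L -> b = a.+1 %% L -> False.
Proof. by move=> ltaL ltbL; rewrite !modnS_small //; do 2 case: eqP; lia. Qed.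

Lemma cycle_edge_meet_joint a b v : a < L -> b < L -> a != b ->
  v \in cycle_edge a -> v \in cycle_edge b ->
  (v = joint a /\ a = b.+1 %% L) \/ (v = joint b /\ b = a.+1 %% L).
Proof.
move=> ltaL ltbL neab; rewrite !mem_cycle_edge //.
case/orP => [/eqP va | /eqP va] /orP [/eqP vb | /eqP vb].
- by rewrite -va vb eqxx in neab.
- have ea : a = b.+1 %% L by rewrite -va vb joint_div.
  by left; rewrite vb -joint_mod -ea.
- have eb : b = a.+1 %% L by rewrite -vb va joint_div.
  by right; rewrite va -joint_mod -eb.
- move: neab; rewrite (succ_mod_inj ltaL ltbL) ?eqxx //.
  by rewrite -!joint_div -va -vb.
Qed.

Lemma cycle_edge_meet i i' :
  i %% L != i' %% L -> #|cycle_edge i :&: cycle_edge i'| <= 1.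
Proof.
rewrite -(cycle_edge_mod i) -(cycle_edge_mod i').
have L_gt0 : 0 < L by lia.
move: (ltn_pmod i L_gt0) (ltn_pmod i' L_gt0).
move: (i %% L) (i' %% L) => a b ltaL ltbL neab.
apply/card_le1_eqP => v w; rewrite !in_setI => /andP [va vb] /andP [wa wb].
case: (cycle_edge_meet_joint ltaL ltbL neab va vb) => [] [-> e1];
case: (cycle_edge_meet_joint ltaL ltbL neab wa wb) => [] [-> e2] //.
  by case: (succ_mod_asym ltaL ltbL e1 e2).
by case: (succ_mod_asym ltaL ltbL e2 e1).
Qed.

Lemma no_red_loose_cycle (W : finType) c (blk : W -> option 'I_c)
    (Fam : 'I_c -> {set {set W}}) :
  (forall j s, s \in Fam j -> s \subset core blk) ->
  (forall j s, s \in Fam j -> 1 < #|s|) ->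
  (forall j, #|block blk j| < n) ->
  no_single_meet Fam \/
  (one_per_colour Fam /\ #|core blk| + L < n) ->
  ~ mono_copy (red blk Fam) true (loose_cycle k n).
Proof.
move=> Fam_core Fam_card small_block Fam_cases [f [f_inj f_red]].
pose Ed i := f @: cycle_edge i; pose x i := f (joint i).
have L_gt1 : 1 < L by lia.
have Ed_mod i : Ed (i %% L) = Ed i by rewrite /Ed cycle_edge_mod.
have x_mod i : x (i %% L) = x i by rewrite /x joint_mod.
have x_in i : x i \in Ed i by apply: imset_f; exact: joint_in.
have x_in_pred i : x i.+1 \in Ed i by apply: imset_f; exact: joint_in_pred.
have x_neq i : x i != x i.+1 by rewrite (inj_eq f_inj) joint_neq.
have Ed_meet i i' : i %% L != i' %% L -> #|Ed i :&: Ed i'| <= 1.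
  by move=> ne; rewrite -imsetI ?card_imset ?cycle_edge_meet //; move=> ? ? _ _; exact: f_inj.
have Ed_red i : red blk Fam (Ed i) by apply: f_red; exact: cycle_edge_loose.
have U_eq : \bigcup_(i < L) Ed i = f @: [set: 'I_n].
  rewrite -cycle_edge_cover; apply/setP => y; apply/bigcupP/imsetP.
    by case=> i _ /imsetP [v vi ->]; exists v => //; apply/bigcupP; exists i.
  by case=> v /bigcupP [i _ vi] ->; exists i => //; exact: imset_f.
have U_card : #|\bigcup_(i < L) Ed i| = n by rewrite U_eq card_imset // cardsT card_ord.
case: Fam_cases => [Fam_meet | [Fam_one small_core]].
  have [j Uj] := no_single_meet_red_walk Fam_core L_gt1 Ed_mod x_in x_in_pred x_neq
    Ed_meet Ed_red Fam_card Fam_meet.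
  by move: (subset_leq_card Uj); rewrite U_card leqNgt small_block.
case: (one_per_colour_red_walk Fam_core L_gt1 Ed_mod x_mod x_in x_in_pred x_neq
    Ed_meet Ed_red Fam_card Fam_one) => [[j Uj] |].
  by move: (subset_leq_card Uj); rewrite U_card leqNgt small_block.
by rewrite U_card leqNgt small_core.
Qed.

End LooseCycle.

(** * The k-graph H *)

Lemma card_part chi (a : 'I_chi -> nat) i : #|part a i| = a i.
Proof.
have -> : part a i = [set Tagged (fun i => 'I_(a i)) y | y : 'I_(a i)].
  apply/setP => x; rewrite !inE; apply/eqP/imsetP => [<- | [y _ ->] //].
  by exists (tagged x); rewrite ?taggedK.
by rewrite card_imset ?card_ord //; exact: eq_from_Tagged.
Qed.

Lemma part_inj chi (a : 'I_chi -> nat) i i' x :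
  x \in part a i -> x \in part a i' -> i = i'.
Proof. by rewrite !inE => /eqP <- /eqP. Qed.

Lemma Hgraph_edge k chi (a : 'I_chi -> nat) i (S : {set Hvert a}) w :
  0 < k -> S \subset part a i -> #|S| = k - 1 -> w \notin part a i ->
  w |: S \in Hgraph k a.
Proof.
move=> k_gt0 Si cardS wi; have wS : w \notin S by apply: contra wi; exact: (subsetP Si).
rewrite inE cardsU1 wS cardS; apply/andP; split; first by apply/eqP; lia.
apply/existsP; exists i; rewrite setIUl (setIidPl Si).
have -> : [set w] :&: part a i = set0 by apply/disjoint_setI0; rewrite disjoints1.
by rewrite set0U cardS.
Qed.

Lemma card_Hvert_ge c (a : 'I_c.+1 -> nat) X :
  (forall i : 'I_c.+1, i < c -> X <= a i) -> c * X + a ord_max <= #|{: Hvert a}|.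
Proof.
move=> le_Xa; rewrite card_tagged sumnE big_map big_enum /=.
under eq_bigr => i _ do rewrite card_ord.
rewrite big_ord_recr /= leq_add2r.
apply: (@leq_trans (\sum_(i < c) X)); first by rewrite sum_nat_const card_ord.
by apply: leq_sum => i _; apply: le_Xa; rewrite /= ltn_ord.
Qed.

Section BlueHgraph.

Variables (W : finType) (c : nat) (blk : W -> option 'I_c) (Fam : 'I_c -> {set {set W}}).
Variables (k t : nat) (a : 'I_c.+1 -> nat).
Hypotheses (k_gt1 : 1 < k) (Fam_card : forall j s, s \in Fam j -> #|s| = k - 1).
Hypothesis big_part : forall i : 'I_c.+1, i < c -> c * (k - 2) + #|core blk| < a i.
Variable f : Hvert a -> W.
Hypotheses (f_inj : injective f)
  (f_blue : forall e, e \in Hgraph k a -> red blk Fam (f @: e) = false).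

Local Notation wid i := (widen_ord (leqnSn c) i).

Definition anchored (i j : 'I_c) : Prop := exists S : {set Hvert a},
  [/\ S \subset part a (wid i), #|S| = k - 1 & f @: S \subset block blk j].

Lemma Hgraph_not_red e : e \in Hgraph k a -> red blk Fam (f @: e) -> False.
Proof. by move/f_blue ->. Qed.

Lemma wid_notin_last (i : 'I_c) w : w \in part a (wid i) -> w \notin part a ord_max.
Proof. by move=> wi; apply/negP => /(part_inj wi) /(congr1 val) /=; have := ltn_ord i; lia. Qed.

Lemma anchored_excl i j w :
  anchored i j -> w \notin part a (wid i) -> f w \notin block blk j.
Proof.
case=> S [Si cardS Sj] wi; apply/negP => wj; apply: (Hgraph_not_red (e := w |: S)).
  by apply: Hgraph_edge Si cardS wi; lia.
by apply: (red_internal Fam (j := j)); rewrite imsetU1 subUset sub1set wj.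
Qed.

Lemma exists_anchored i : exists j, anchored i j.
Proof.
have [|j ltj] := @block_pigeonhole _ _ blk (f @: part a (wid i)) (k - 2).
  by rewrite card_imset // card_part addnC big_part //= ltn_ord.
have [s sj cards] : exists2 s : {set W},
    s \subset f @: part a (wid i) :&: block blk j & #|s| = k - 1.
  by apply: (@exists_card_subset W); move: ltj; lia.
exists j, (part a (wid i) :&: f @^-1: s).
have fS : f @: (part a (wid i) :&: f @^-1: s) = s.
  by apply: imset_preim_subset; exact: subset_trans sj (subsetIl _ _).
split; [exact: subsetIl | by rewrite -cards -(card_imset _ f_inj) fS | ].
by rewrite fS; exact: subset_trans sj (subsetIr _ _).
Qed.

Lemma anchored_vertex i j :
  anchored i j -> exists2 w, w \in part a (wid i) & f w \in block blk j.
Proof.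
case=> S [Si cardS Sj]; have /card_gt0P [w wS] : 0 < #|S| by rewrite cardS; lia.
by exists w; [exact: (subsetP Si) | apply: (subsetP Sj); exact: imset_f].
Qed.

Lemma anchored_onto j : exists i, anchored i j.
Proof.
have [J anchorJ] := fin_all_exists exists_anchored.
have J_inj : injective J.
  move=> i1 i2 eqJ; have [w wi2 wJ] := anchored_vertex (anchorJ i2).
  apply/eqP; apply: contraT => ne.
  have wi1 : w \notin part a (wid i1).
    by apply: contra ne => /(part_inj wi2) /(congr1 val) /= /val_inj ->.
  by move: (anchored_excl (anchorJ i1) wi1); rewrite eqJ wJ.
by have /codomP [i ->] := injF_onto J_inj j; exists i.
Qed.

Lemma last_part_core y : y \in part a ord_max -> f y \in core blk.
Proof.
move=> ylast; apply: contraT => /notin_core [j yj].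
have [i anchor_ij] := anchored_onto j.
have yi : y \notin part a (wid i) by apply/negP => /wid_notin_last; rewrite ylast.
by move: (anchored_excl anchor_ij yi); rewrite yj.
Qed.

Lemma blue_Hgraph_contra :
  a ord_max = t ->
  (forall S : {set W}, S \subset core blk -> #|S| = t ->
     exists j, exists2 s, s \in Fam j & s \subset S) ->
  False.
Proof.
move=> last_part Fam_cover.
have last_sub : f @: part a ord_max \subset core blk.
  by apply/subsetP => _ /imsetP [y ylast ->]; exact: last_part_core.
have last_card : #|f @: part a ord_max| = t by rewrite card_imset // card_part.
have [j [s sF sS]] := Fam_cover _ last_sub last_card.
have [i anchor_ij] := anchored_onto j; have [w wi wj] := anchored_vertex anchor_ij.
have fP : f @: (part a ord_max :&: f @^-1: s) = s by exact: imset_preim_subset.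
apply: (Hgraph_not_red (e := w |: (part a ord_max :&: f @^-1: s))).
  apply: Hgraph_edge (subsetIl _ _) _ (wid_notin_last wi); first by lia.
  by rewrite -(card_imset _ f_inj) fP (Fam_card sF).
by rewrite imsetU1 fP; exact: red_crossing sF wj.
Qed.

End BlueHgraph.

Lemma no_blue_Hgraph (W : finType) c (blk : W -> option 'I_c)
    (Fam : 'I_c -> {set {set W}}) k t (a : 'I_c.+1 -> nat) :
  1 < k -> (forall j s, s \in Fam j -> #|s| = k - 1) ->
  (forall i : 'I_c.+1, i < c -> c * (k - 2) + #|core blk| < a i) ->
  a ord_max = t ->
  (forall S : {set W}, S \subset core blk -> #|S| = t ->
     exists j, exists2 s, s \in Fam j & s \subset S) ->
  ~ mono_copy (red blk Fam) false (Hgraph k a).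
Proof.
move=> k_gt1 Fam_card big_part last_part Fam_cover [f [f_inj f_blue]].
exact: (blue_Hgraph_contra k_gt1 Fam_card big_part f_inj f_blue last_part Fam_cover).
Qed.

(** * The two colourings *)

Definition host (m c b : nat) : finType := ('I_m + 'I_c * 'I_b)%type.

Definition host_blk m c b (x : host m c b) : option 'I_c :=
  if x is inr p then Some p.1 else None.

Section HostCard.

Variables m c b : nat.

Lemma host_core :
  core (@host_blk m c b) = (@inl 'I_m ('I_c * 'I_b) : _ -> host m c b) @: [set: 'I_m].
Proof.
apply/setP => -[y | p]; rewrite !inE; first by apply/esym/imsetP; exists y; rewrite ?inE.
by apply/esym/imsetP => -[].
Qed.

Lemma card_host_core : #|core (@host_blk m c b)| = m.
Proof. by rewrite host_core card_imset ?cardsT ?card_ord // => ? ? []. Qed.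

Lemma card_host_block j : #|block (@host_blk m c b) j| = b.
Proof.
have -> : block (@host_blk m c b) j = [set inr (j, y) | y : 'I_b].
  apply/setP => -[y | [j' y]]; rewrite !inE /=.
    by apply/esym/imsetP => -[].
  apply/eqP/imsetP => [[->] | [y' _ [-> _]]] //; by exists y.
by rewrite card_imset ?card_ord // => ? ? [].
Qed.

Lemma card_host : #|host m c b| = m + c * b.
Proof. by rewrite card_sum card_prod !card_ord. Qed.

End HostCard.

Section CoreFamily.

Variables m c b : nat.
Variable F : 'I_c -> {set {set 'I_m}}.

Local Notation inc := (@inl 'I_m ('I_c * 'I_b) : 'I_m -> host m c b).

Definition core_family (j : 'I_c) : {set {set host m c b}} :=
  [set inc @: s | s : {set 'I_m} in F j].

Let inc_inj : injective inc. Proof. by move=> ? ? []. Qed.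

Lemma core_family_core j s : s \in core_family j -> s \subset core (@host_blk m c b).
Proof.
case/imsetP => s' _ ->; rewrite host_core.
by apply/subsetP => _ /imsetP [y _ ->]; rewrite imset_f.
Qed.

Lemma core_family_card r :
  (forall j s, s \in F j -> #|s| = r) -> forall j s, s \in core_family j -> #|s| = r.
Proof. by move=> F_card j _ /imsetP [s sF ->]; rewrite card_imset // (F_card j). Qed.

Lemma core_family_no_single_meet : no_single_meet F -> no_single_meet core_family.
Proof.
move=> F_meet j j' _ _ /imsetP [s sF ->] /imsetP [s' s'F ->].
by rewrite -imsetI ?card_imset // => [/(F_meet _ _ _ _ sF s'F) -> | ? ? _ _ []].
Qed.

Lemma core_family_one_per_colour : one_per_colour F -> one_per_colour core_family.
Proof.
by move=> F_one j _ _ /imsetP [s sF ->] /imsetP [s' s'F ->]; rewrite (F_one _ _ _ sF s'F).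
Qed.

Lemma core_family_cover t :
  (forall S : {set 'I_m}, #|S| = t -> exists j, exists2 s, s \in F j & s \subset S) ->
  forall S : {set host m c b}, S \subset core (@host_blk m c b) -> #|S| = t ->
    exists j, exists2 s, s \in core_family j & s \subset S.
Proof.
move=> F_cover S S_core cardS.
have S_eq : inc @: (setT :&: inc @^-1: S) = S.
  by apply: imset_preim_subset; rewrite -host_core.
have [|j [s sF sS]] := F_cover (setT :&: inc @^-1: S).
  by rewrite -cardS -[in RHS]S_eq card_imset.
exists j, (inc @: s); first exact: imset_f.
by rewrite -S_eq imsetS.
Qed.

End CoreFamily.

Lemma independent_cover m t (E : {set {set 'I_m}}) :
  (forall S, independent E S -> #|S| < t) ->
  forall S : {set 'I_m}, #|S| = t -> exists2 e, e \in E & e \subset S.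
Proof.
move=> E_ind S cardS; have : ~~ independent E S by apply/negP => /E_ind; rewrite cardS ltnn.
by rewrite negb_forall_in => /existsP [e /andP [eE]]; rewrite negbK; exists e.
Qed.

(* Colour [j] gets the [j]-th [r]-subset; for [j >= 'C(m, r)] the default [set0] has the
   wrong size (unless [r = 0]) and colour [j] gets nothing. *)
Definition colour_draws (m r c : nat) (j : 'I_c) : {set {set 'I_m}} :=
  let K := [set s : {set 'I_m} | #|s| == r] in [set s in K | s == nth set0 (enum K) j].

Section ColourDraws.

Variables m r c : nat.

Lemma colour_draws_card (j : 'I_c) s : s \in colour_draws m r j -> #|s| = r.
Proof. by rewrite !inE => /andP [/eqP]. Qed.

Lemma colour_draws_one_per_colour : one_per_colour (@colour_draws m r c).
Proof. by move=> j s s'; rewrite !inE => /andP [_ /eqP ->] /andP [_ /eqP ->]. Qed.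

Lemma colour_draws_cover t : 'C(m, r) <= c -> r <= t ->
  forall S : {set 'I_m}, #|S| = t ->
    exists j : 'I_c, exists2 s, s \in colour_draws m r j & s \subset S.
Proof.
move=> le_binc le_rt S cardS; set K := [set s : {set 'I_m} | #|s| == r].
have le_rS : r <= #|S| by rewrite cardS.
have [s sS cards] := exists_card_subset le_rS.
have sK : s \in enum K by rewrite mem_enum inE cards.
have lt_idx : index s (enum K) < c.
  have cardK : #|K| = 'C(m, r) by rewrite card_draws card_ord.
  by apply: leq_trans le_binc; rewrite -cardK cardE index_mem.
exists (Ordinal lt_idx), s => //.
by rewrite !inE cards eqxx /= nth_index.
Qed.

End ColourDraws.

Lemma host_not_arrow k n L c m t N (a : 'I_c.+1 -> nat) (F : 'I_c -> {set {set 'I_m}}) :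
  2 < k -> n = L * (k - 1) -> 2 < L ->
  (forall j s, s \in F j -> #|s| = k - 1) ->
  (forall S : {set 'I_m}, #|S| = t -> exists j, exists2 s, s \in F j & s \subset S) ->
  no_single_meet F \/ (one_per_colour F /\ m + L < n) ->
  (forall i : 'I_c.+1, i < c -> c * (k - 2) + m < a i) -> a ord_max = t ->
  N <= c * (n - 1) + m ->
  ~ ramsey_arrow N (loose_cycle k n) (Hgraph k a).
Proof.
move=> k_gt2 n_eq L_gt2 F_card F_cover F_cases big_part last_part leN.
have k_gt1 : 1 < k by lia.
have Fam_card := core_family_card (b := n - 1) F_card.
apply: (@not_arrow_of_colouring _ _ (red (@host_blk m c (n - 1)) (core_family (n - 1) F))).
- by rewrite card_host addnC.
- apply: (no_red_loose_cycle k_gt1 n_eq L_gt2 (@core_family_core _ _ _ _)).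
  + by move=> j s /Fam_card ->; lia.
  + by move=> j; rewrite card_host_block n_eq; nia.
  + case: F_cases => [F_meet | [F_one small_m]]; [left | right].
      exact: core_family_no_single_meet.
    by rewrite card_host_core; split; first exact: core_family_one_per_colour.
- apply: (no_blue_Hgraph k_gt1 Fam_card _ last_part (core_family_cover F_cover)).
  by rewrite card_host_core.
Qed.

Lemma tau_host_not_arrow k n L c m t N (a : 'I_c.+1 -> nat) :
  2 < k -> n = L * (k - 1) -> 2 < L -> 0 < c -> tau_witness (k - 1) t m ->
  (forall i : 'I_c.+1, i < c -> c * (k - 2) + m < a i) -> a ord_max = t ->
  N <= c * (n - 1) + m ->
  ~ ramsey_arrow N (loose_cycle k n) (Hgraph k a).
Proof.
move=> k_gt2 n_eq L_gt2 c_gt0 [E [E_unif [E_ind E_meet]]].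
have E_cover (S : {set 'I_m}) : #|S| = t -> exists j : 'I_c, exists2 e, e \in E & e \subset S.
  by move=> cardS; have [e eE eS] := independent_cover E_ind cardS; exists (Ordinal c_gt0), e.
have E_single : no_single_meet (fun _ : 'I_c => E).
  by move=> j j' s s' sE s'E /eqP; apply: contraTeq (E_meet _ _ sE s'E).
apply: (host_not_arrow k_gt2 n_eq L_gt2 _ E_cover (or_introl E_single)).
by move=> j; exact: E_unif.
Qed.

Lemma draws_host_not_arrow k n L c m t N (a : 'I_c.+1 -> nat) :
  2 < k -> n = L * (k - 1) -> 2 < L -> 'C(m, k - 1) <= c -> k - 1 <= t -> m + L < n ->
  (forall i : 'I_c.+1, i < c -> c * (k - 2) + m < a i) -> a ord_max = t ->
  N <= c * (n - 1) + m ->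
  ~ ramsey_arrow N (loose_cycle k n) (Hgraph k a).
Proof.
move=> k_gt2 n_eq L_gt2 le_binc le_t small_m.
apply: (host_not_arrow k_gt2 n_eq L_gt2 (@colour_draws_card m (k - 1) c)
          (colour_draws_cover le_binc le_t)).
by right; split; first exact: colour_draws_one_per_colour.
Qed.

(* The last hypothesis says that H, with c parts of more than c(k-2)+q vertices and one of
   t vertices, fits into the c(n-1)+q vertices of the host. *)
Lemma core_lt_cycle k q c t n L :
  2 < k -> k - 1 <= t -> k - 1 <= q -> 'C(q, k - 1) <= c -> 2 < L -> n = L * (k - 1) ->
  c * (c * (k - 2) + q).+1 + t <= c * (n - 1) + q -> q + L < n.
Proof.
move=> k_gt2 le_t le_q le_binc L_gt2 n_eq le_sizes.
have [-> | ne_qk] := eqVneq q (k - 1); first by rewrite n_eq; nia.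
have le_qc : q <= c by rewrite (leq_trans _ le_binc) // n_leq_bin //; lia.
have fit : (c * (k - 2) + q).+1 < n.
  rewrite ltnNge; apply/negP => big.
  have : c * n <= c * (c * (k - 2) + q).+1 by rewrite leq_mul2l big orbT.
  by move: le_sizes; nia.
by rewrite n_eq in fit *; nia.
Qed.

Theorem proposition1p10 (k t q chi n T : nat) (a : 'I_chi -> nat) :
  3 <= k -> k - 1 <= t -> k - 1 <= q -> 'C(q, k - 1) < chi ->
  3 * (k - 1) <= n -> n %% (k - 1) = 0 ->
  is_tau (k - 1) t T ->
  (forall i : 'I_chi, val i < chi - 1 -> (chi - 1) * (k - 2) + maxn T q < a i) ->
  (forall i : 'I_chi, val i = chi - 1 -> a i = t) ->
  (* R(C^{(k)}_{n,1}, H) > (chi-1)(n-1) + max{tau(k-1,t), q} *)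
  forall N, N <= (chi - 1) * (n - 1) + maxn T q ->
    ~ ramsey_arrow N (loose_cycle k n) (Hgraph k a).
Proof.
move=> k_ge3 le_t le_q lt_chi n_ge n_mod [tau_T _] big last N.
case: chi a lt_chi big last => [// | c] a; rewrite ltnS (subn1 c.+1) /= => le_binc big last leN.
have last' : a ord_max = t by apply: last.
set L := n %/ (k - 1).
have n_eq : n = L * (k - 1) by rewrite divnK // /dvdn n_mod.
have L_gt2 : 2 < L by rewrite leq_divRL; lia.
have [ltN | geN] := ltnP N #|{: Hvert a}|.
  apply: not_arrow_of_card_lt ltN; apply/set0Pn; exists (cycle_edge k n 0).
  by apply: (cycle_edge_loose _ n_eq); lia.
have [le_qT | lt_Tq] := leqP q T.
  rewrite (maxn_idPl le_qT) in big leN.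
  apply: (tau_host_not_arrow k_ge3 n_eq L_gt2 _ tau_T big last' leN).
  by rewrite (leq_trans _ le_binc) // bin_gt0.
rewrite (maxn_idPr (ltnW lt_Tq)) in big leN.
apply: (draws_host_not_arrow k_ge3 n_eq L_gt2 le_binc le_t _ big last' leN).
apply: (core_lt_cycle k_ge3 le_t le_q le_binc L_gt2 n_eq).
rewrite -last'; exact: leq_trans (card_Hvert_ge big) (leq_trans geN leN).
Qed.
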